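(* Let $S_4$ be the symmetric group of degree 4. The following d-identities form a basis of d-identities of $S_4$ (i.e. they all hold in $S_4$, and every group satisfying all of them is isomorphic to a section of $S_4$): (1) $\omega_{24}=\bigvee_{0\le i<j\le 24}(x_i=x_j)$; (2) $(x_1^4=1)\vee(x_2^4=1)\vee((x_1x_2)^4=1)\vee((x_1x_2^2)^4=1)$; (3) $(x^3=1)\vee(x^4=1)$; (4) $(x_1^6=1)\vee(x_2^6=1)\vee(x_1=x_2)\vee(x_1x_2=1)\vee((x_1x_2)^3=1)$; (5) $(x_1^3=1)\vee(x_2^3=1)\vee(x_3^3=1)\vee((x_1^{-1}x_2)^3=1)\vee((x_1^{-1}x_3)^3=1)\vee((x_2^{-1}x_3)^3=1)\vee\theta(x_1,x_2,x_3)$.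
   Context: A d-identity (disjunctive identity) is a universally quantified formula $\forall x_1\dots x_k\,[(f_1=1)\vee\dots\vee(f_n=1)]$ with the $f_i$ words in the free group on the variables; $u=v$ abbreviates $uv^{-1}=1$. A group satisfies it if it is true for all assignments. For a group $G$, $\mathrm{dvar}(G)$ is the class of groups satisfying every d-identity satisfied by $G$; for finite $G$ it is the class of groups isomorphic to sections (quotients of subgroups) of $G$. A set of d-identities is a basis of d-identities of $G$ if all its members hold in $G$ and every group satisfying them lies in $\mathrm{dvar}(G)$. Notation: ''$u\in\langle v\rangle$'' abbreviates $(u=1)\vee(u=v)\vee(u=v^2)\vee(u=v^3)$, and $\theta(z_1,z_2,z_3)$ denotes $\Big[\bigvee_{i\ne j} z_i\in\langle z_j\rangle\Big]\vee\Big[\bigvee_{\sigma\in S_3} z_{\sigma(1)}\in\langle z_{\sigma(2)}z_{\sigma(3)}\rangle\Big]\vee\Big[\bigvee_{\sigma\in S_3} z_{\sigma(1)}z_{\sigma(2)}\in\langle z_{\sigma(2)}z_{\sigma(3)}\rangle\Big]$ with $i,j\in\{1,2,3\}$. *)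

From mathcomp Require Import all_boot all_fingroup.
Set Implicit Arguments. Unset Strict Implicit. Unset Printing Implicit Defensive.

Record absgroup := AbsGroup {
  carrier :> Type;
  gmul : carrier -> carrier -> carrier;
  ginv : carrier -> carrier;
  gone : carrier;
  gmulA : forall x y z, gmul x (gmul y z) = gmul (gmul x y) z;
  gmul1 : forall x, gmul gone x = x;
  gmulV : forall x, gmul (ginv x) x = gone
}.

Definition gpow (G : absgroup) (x : G) (n : nat) : G := iter n (gmul x) (gone G).

Definition fin_group (gT : finGroupType) : absgroup :=
  @AbsGroup gT (fun x y => (x * y)%g) (fun x => (x^-1)%g) 1%g
    (@mulgA gT) (@mul1g gT) (@mulVg gT).

Definition S4 : finGroupType := {perm 'I_4}.

Definition inpow (G : absgroup) (u v : G) : Prop :=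
  u = gone G \/ u = v \/ u = gpow v 2 \/ u = gpow v 3.

(* theta(z_1,z_2,z_3); z is indexed by 'I_3; the disjunctions over i <> j and
   over sigma in S_3 are written as existentials over distinct indices. *)
Definition theta (G : absgroup) (z : 'I_3 -> G) : Prop :=
  (exists i j : 'I_3, i != j /\ inpow (z i) (z j)) \/
  (exists i j k : 'I_3, [/\ i != j, j != k & i != k] /\
      inpow (z i) (gmul (z j) (z k))) \/
  (exists i j k : 'I_3, [/\ i != j, j != k & i != k] /\
      inpow (gmul (z i) (z j)) (gmul (z j) (z k))).

Definition dId1 (G : absgroup) : Prop :=
  forall x : 'I_25 -> G, exists i j : 'I_25, i < j /\ x i = x j.

Definition dId2 (G : absgroup) : Prop :=
  forall x1 x2 : G,
    gpow x1 4 = gone G \/ gpow x2 4 = gone G \/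
    gpow (gmul x1 x2) 4 = gone G \/ gpow (gmul x1 (gpow x2 2)) 4 = gone G.

Definition dId3 (G : absgroup) : Prop :=
  forall x : G, gpow x 3 = gone G \/ gpow x 4 = gone G.

Definition dId4 (G : absgroup) : Prop :=
  forall x1 x2 : G,
    gpow x1 6 = gone G \/ gpow x2 6 = gone G \/ x1 = x2 \/
    gmul x1 x2 = gone G \/ gpow (gmul x1 x2) 3 = gone G.

Definition dId5 (G : absgroup) : Prop :=
  forall x1 x2 x3 : G,
    gpow x1 3 = gone G \/ gpow x2 3 = gone G \/ gpow x3 3 = gone G \/
    gpow (gmul (ginv x1) x2) 3 = gone G \/
    gpow (gmul (ginv x1) x3) 3 = gone G \/
    gpow (gmul (ginv x2) x3) 3 = gone G \/
    theta [ffun i : 'I_3 => if i == 0 :> nat then x1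
                            else if i == 1 :> nat then x2 else x3].

Definition satisfies_basis (G : absgroup) : Prop :=
  [/\ dId1 G, dId2 G, dId3 G, dId4 G & dId5 G].

Definition section_of (gT : finGroupType) (G : absgroup) : Prop :=
  exists (H K : {group gT}) (f : G -> coset_of K),
    [/\ (K <| H)%g,
        injective f,
        (forall x y : G, f (gmul x y) = (f x * f y)%g) &
        (forall c : coset_of K, c \in (H / K)%g <-> exists x : G, f x = c)].

(* S4 satisfies the five d-identities, which is checked by evaluation over its
   24 elements.  Conversely, d-identities pass to subgroups, and (1) says that a model
   has at most 24 elements, so it is a finite group G satisfying them.  By (3) every
   element has order 1, 2, 3 or 4, so |G| is 1, 2, 3, 4, 6, 8, 9, 12, 16, 18 or 24.
   Order 9 and 18 contradict (2) in a subgroup of order 9; in a 2-group, (4) makes all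
   but two elements involutions, and (5) forbids three independent central ones, which
   yields a non-central involution and rules out order 16; (3) forbids elements of
   order 6.  In each remaining case one finds a core-free subgroup of index at most 4
   (trivial, cyclic of order 2 or 3, or the normalizer of a Sylow 3-subgroup), and the
   action on its cosets embeds G into S4. *)

From HB Require Import structures.
From mathcomp Require Import all_boot all_fingroup.
From mathcomp Require Import cyclic pgroup sylow.
From Stdlib Require Import Classical ClassicalEpsilon.
Set Implicit Arguments. Unset Strict Implicit. Unset Printing Implicit Defensive.

(** * Subgroups of abstract groups *)

Section AbsGroupLaws.
Variable G : absgroup.
Implicit Types x : G.

Lemma gmul_idem_eq1 x : gmul x x = x -> x = gone G.
Proof. by move=> xx; rewrite -(gmulV x) -{3}xx gmulA gmulV gmul1. Qed.

Lemma gmulVr x : gmul x (ginv x) = gone G.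
Proof.
by apply: gmul_idem_eq1; rewrite -gmulA [gmul (ginv x) _]gmulA gmulV gmul1.
Qed.

Lemma gmul1r x : gmul x (gone G) = x.
Proof. by rewrite -(gmulV x) gmulA gmulVr gmul1. Qed.

End AbsGroupLaws.

Section SubgroupInheritance.
Variables (H G : absgroup) (f : H -> G).
Hypotheses (fM : forall x y, f (gmul x y) = gmul (f x) (f y)) (f_inj : injective f).

Lemma hom_gone : f (gone H) = gone G.
Proof. by apply: gmul_idem_eq1; rewrite -fM gmul1. Qed.

Lemma hom_ginv x : f (ginv x) = ginv (f x).
Proof.
by rewrite -[f _]gmul1 -(gmulV (f x)) -gmulA -fM gmulVr hom_gone gmul1r.
Qed.

Lemma hom_gpow x n : f (gpow x n) = gpow (f x) n.
Proof. by elim: n => [|n IH]; [exact: hom_gone | rewrite /gpow /= fM IH]. Qed.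

Lemma inpow_hom u v : inpow (f u) (f v) -> inpow u v.
Proof. by rewrite /inpow -hom_gone -!hom_gpow => -[|[|[|]]] /f_inj; tauto. Qed.

Lemma theta_hom (zG : 'I_3 -> G) (z : 'I_3 -> H) :
  (forall i, zG i = f (z i)) -> theta zG -> theta z.
Proof.
move=> zE [[i [j [ij +]]] | [[i [j [k [d +]]]] | [i [j [k [d +]]]]]];
  rewrite !zE -?fM => /inpow_hom.
- by left; exists i, j.
- by right; left; exists i, j, k.
- by right; right; exists i, j, k.
Qed.

Lemma dId1_sub : dId1 G -> dId1 H.
Proof. by move=> h x; have [i [j [lt /f_inj]]] := h (fun i => f (x i)); exists i, j. Qed.

Lemma dId2_sub : dId2 G -> dId2 H.
Proof.
move=> h x1 x2; have := h (f x1) (f x2).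
by rewrite -!hom_gpow -!fM -!hom_gpow -hom_gone => -[|[|[|]]] /f_inj; tauto.
Qed.

Lemma dId3_sub : dId3 G -> dId3 H.
Proof.
by move=> h x; have := h (f x); rewrite -!hom_gpow -hom_gone => -[|] /f_inj; tauto.
Qed.

Lemma dId4_sub : dId4 G -> dId4 H.
Proof.
move=> h x1 x2; have := h (f x1) (f x2).
by rewrite -!fM -!hom_gpow -hom_gone => -[|[|[|[|]]]] /f_inj; tauto.
Qed.

Lemma dId5_sub : dId5 G -> dId5 H.
Proof.
move=> h x1 x2 x3; have := h (f x1) (f x2) (f x3).
rewrite -!hom_ginv -!fM -!hom_gpow -hom_gone.
do 6 (case=> [/f_inj|]; first tauto).
move=> th; do 6 right; apply: theta_hom th => i.
by rewrite !ffunE; case: ifP => _; last case: ifP.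
Qed.

Lemma satisfies_basis_sub : satisfies_basis G -> satisfies_basis H.
Proof.
case=> d1 d2 d3 d4 d5; split; [exact: dId1_sub | exact: dId2_sub | exact: dId3_sub
                             | exact: dId4_sub | exact: dId5_sub].
Qed.

End SubgroupInheritance.

Lemma gpow_fin (gT : finGroupType) (x : gT) n : @gpow (fin_group gT) x n = (x ^+ n)%g.
Proof. by elim: n => [|n IH] //; rewrite expgS -IH. Qed.

Lemma dId1_fin (gT : finGroupType) : dId1 (fin_group gT) <-> #|gT| <= 24.
Proof.
split=> [h | le24 x].
  rewrite leqNgt; apply/negP => lt24.
  have [i [j [lt_ij /enum_val_inj /(congr1 val) /= eq_ij]]] :=
    h (fun i => enum_val (widen_ord lt24 i)).
  by rewrite eq_ij ltnn in lt_ij.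
apply: NNPP => no_repeat.
suff x_inj : injective x by have := leq_card x x_inj; rewrite card_ord leqNgt ltnS le24.
move=> i j eq_ij; case: (ltngtP i j) => [lt|lt|/val_inj //].
  by case: no_repeat; exists i, j.
by case: no_repeat; exists j, i.
Qed.

(** * The d-identities in S4 *)

(* Spelled out because [ord_enum 3] is stuck under [vm_compute] ([insub] uses the
   opaque [idP]). *)
Definition ord3 : seq 'I_3 := [:: @Ordinal 3 0 isT; @Ordinal 3 1 isT; @Ordinal 3 2 isT].

Definition distinct_pairs : seq ('I_3 * 'I_3) :=
  [seq p <- [seq (i, j) | i <- ord3, j <- ord3] | p.1 != p.2].

Definition distinct_triples : seq ('I_3 * 'I_3 * 'I_3) :=
  [seq t <- [seq (p, k) | p <- [seq (i, j) | i <- ord3, j <- ord3],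
                          k <- ord3]
     | [&& t.1.1 != t.1.2, t.1.2 != t.2 & t.1.1 != t.2]].

Definition of3 (T : Type) (a b c : T) (i : 'I_3) : T :=
  if i == 0 :> nat then a else if i == 1 :> nat then b else c.

Section BooleanIdentities.
Variables (T : eqType) (mul : T -> T -> T) (one : T) (inv : T -> T).
Local Notation pw x n := (iter n (mul x) one).

Definition inpowb (u v : T) := [|| u == one, u == v, u == pw v 2 | u == pw v 3].

Definition thetab (z : 'I_3 -> T) :=
  [|| has (fun p => inpowb (z p.1) (z p.2)) distinct_pairs,
      has (fun t => inpowb (z t.1.1) (mul (z t.1.2) (z t.2))) distinct_triples
    | has (fun t => inpowb (mul (z t.1.1) (z t.1.2)) (mul (z t.1.2) (z t.2)))
          distinct_triples].

Definition dId2b x1 x2 :=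
  [|| pw x1 4 == one, pw x2 4 == one, pw (mul x1 x2) 4 == one
    | pw (mul x1 (pw x2 2)) 4 == one].

Definition dId3b x := (pw x 3 == one) || (pw x 4 == one).

Definition dId4b x1 x2 :=
  [|| pw x1 6 == one, pw x2 6 == one, x1 == x2, mul x1 x2 == one
    | pw (mul x1 x2) 3 == one].

Definition dId5b x1 x2 x3 :=
  [|| pw x1 3 == one, pw x2 3 == one, pw x3 3 == one,
      pw (mul (inv x1) x2) 3 == one, pw (mul (inv x1) x3) 3 == one,
      pw (mul (inv x2) x3) 3 == one | thetab (of3 x1 x2 x3)].

End BooleanIdentities.

Section BooleanTransport.
Variables (T U : eqType) (mulT : T -> T -> T) (oneT : T) (invT : T -> T).
Variables (mulU : U -> U -> U) (oneU : U) (invU : U -> U) (phi : T -> U).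
Hypotheses (phiM : forall x y, phi (mulT x y) = mulU (phi x) (phi y)).
Hypotheses (phi1 : phi oneT = oneU) (phiV : forall x, phi (invT x) = invU (phi x)).
Hypothesis phi_inj : injective phi.

Lemma iter_morph x n : phi (iter n (mulT x) oneT) = iter n (mulU (phi x)) oneU.
Proof. by elim: n => //= n IH; rewrite phiM IH. Qed.

Ltac pull_phi := rewrite -?phiV; repeat rewrite -?iter_morph -?phiM;
                 rewrite -?phi1 ?(inj_eq phi_inj).

Lemma inpowb_morph u v : inpowb mulU oneU (phi u) (phi v) = inpowb mulT oneT u v.
Proof. by rewrite /inpowb; pull_phi. Qed.

Lemma thetab_morph zU z :
  (forall i, zU i = phi (z i)) -> thetab mulU oneU zU = thetab mulT oneT z.
Proof.
move=> zE; rewrite /thetab; congr [|| _, _ | _]; apply: eq_has => t.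
all: by rewrite /= !zE -?phiM inpowb_morph.
Qed.

Lemma dId2b_morph x1 x2 : dId2b mulU oneU (phi x1) (phi x2) = dId2b mulT oneT x1 x2.
Proof. by rewrite /dId2b; pull_phi. Qed.

Lemma dId3b_morph x : dId3b mulU oneU (phi x) = dId3b mulT oneT x.
Proof. by rewrite /dId3b; pull_phi. Qed.

Lemma dId4b_morph x1 x2 : dId4b mulU oneU (phi x1) (phi x2) = dId4b mulT oneT x1 x2.
Proof. by rewrite /dId4b; pull_phi. Qed.

Lemma dId5b_morph x1 x2 x3 :
  dId5b mulU oneU invU (phi x1) (phi x2) (phi x3) = dId5b mulT oneT invT x1 x2 x3.
Proof.
rewrite /dId5b (@thetab_morph _ (of3 x1 x2 x3)); first by pull_phi.
by move=> i; rewrite /of3; case: ifP => _; last case: ifP.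
Qed.

End BooleanTransport.

Section FinGroupReflection.
Variable gT : finGroupType.
Implicit Types u v : gT.

Lemma inpowbP u v : inpowb *%g 1%g u v -> @inpow (fin_group gT) u v.
Proof. by case/or4P=> /eqP; rewrite /inpow; tauto. Qed.

Lemma thetabP (z : 'I_3 -> gT) (zf : 'I_3 -> fin_group gT) :
  (forall i, zf i = z i) -> thetab *%g 1%g z -> theta zf.
Proof.
move=> zE; case/or3P=> [/hasP [[i j]] | /hasP [[[i j] k]] | /hasP [[[i j] k]]];
  rewrite mem_filter /= => /andP [d _] /inpowbP zij.
- by left; exists i, j; rewrite !zE.
- by right; left; exists i, j, k; rewrite !zE; split; first apply/and3P.
- by right; right; exists i, j, k; rewrite !zE; split; first apply/and3P.
Qed.

Lemma dId2_of_bool : (forall x1 x2 : gT, dId2b *%g 1%g x1 x2) -> dId2 (fin_group gT).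
Proof. by move=> h x1 x2; case/or4P: (h x1 x2) => /eqP; tauto. Qed.

Lemma dId3_of_bool : (forall x : gT, dId3b *%g 1%g x) -> dId3 (fin_group gT).
Proof. by move=> h x; case/orP: (h x) => /eqP; tauto. Qed.

Lemma dId4_of_bool : (forall x1 x2 : gT, dId4b *%g 1%g x1 x2) -> dId4 (fin_group gT).
Proof.
move=> h x1 x2; move: (h x1 x2); rewrite /dId4b.
by do 4 (case/orP=> [/eqP|]; first tauto); move/eqP; tauto.
Qed.

Lemma dId5_of_bool :
  (forall x1 x2 x3 : gT, dId5b *%g 1%g inv x1 x2 x3) -> dId5 (fin_group gT).
Proof.
move=> h x1 x2 x3; move: (h x1 x2 x3); rewrite /dId5b.
do 6 (case/orP=> [/eqP|]; first tauto).
by move/thetabP=> th; do 6 right; apply: th => i; rewrite ffunE.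
Qed.

End FinGroupReflection.

(* A permutation of 'I_4 is encoded by the list of its images, on which the group law
   evaluates; [code_mul a b] is "a, then b", matching [permM]. *)
Definition code_mul (a b : seq nat) : seq nat := [seq nth 0 b (nth 0 a i) | i <- iota 0 4].
Definition code_one : seq nat := iota 0 4.
Definition code_inv (a : seq nat) : seq nat := iter 23 (code_mul a) code_one.
Definition S4_codes : seq (seq nat) := permutations (iota 0 4).

Definition perm_code (s : S4) : seq nat := [seq val (s i) | i <- enum 'I_4].

Lemma perm_code_nth (s : S4) (i : 'I_4) : nth 0 (perm_code s) i = val (s i).
Proof. by rewrite (nth_map ord0) ?size_enum_ord // nth_ord_enum. Qed.

Lemma perm_codeM (s t : S4) : perm_code (s * t)%g = code_mul (perm_code s) (perm_code t).
Proof.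
rewrite /code_mul -val_enum_ord -map_comp; apply: eq_map => i /=.
by rewrite permM !perm_code_nth.
Qed.

Lemma perm_code1 : perm_code 1%g = code_one.
Proof. by rewrite /code_one -val_enum_ord; apply: eq_map => i; rewrite perm1. Qed.

Lemma perm_code_inj : injective perm_code.
Proof.
move=> s t eq_st; apply/permP => i; apply: val_inj.
by rewrite -!perm_code_nth eq_st.
Qed.

Lemma perm_codeV (s : S4) : perm_code s^-1%g = code_inv (perm_code s).
Proof.
have s24 : (s ^+ 24 = 1)%g.
  by apply/eqP; rewrite -order_dvdn; have := order_dvdG (in_setT s); rewrite cardsT card_Sn.
have -> : (s^-1 = s ^+ 23)%g by rewrite -[RHS]mul1g -(mulVg s) -mulgA -expgS s24 mulg1.
by rewrite -gpow_fin /code_inv (iter_morph perm_codeM perm_code1).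
Qed.

Lemma perm_code_mem (s : S4) : perm_code s \in S4_codes.
Proof.
rewrite mem_permutations /perm_code -val_enum_ord (map_comp val) perm_map //.
apply: uniq_perm; rewrite ?(map_inj_uniq (@perm_inj _ s)) ?enum_uniq // => i.
by rewrite mem_enum; apply/mapP; exists (s^-1 i)%g; rewrite ?mem_enum ?permKV.
Qed.

Lemma S4_codes_dId2 : all (fun a => all (dId2b code_mul code_one a) S4_codes) S4_codes.
Proof. by vm_compute. Qed.

Lemma S4_codes_dId3 : all (dId3b code_mul code_one) S4_codes.
Proof. by vm_compute. Qed.

Lemma S4_codes_dId4 : all (fun a => all (dId4b code_mul code_one a) S4_codes) S4_codes.
Proof. by vm_compute. Qed.

Lemma S4_codes_dId5 :
  all (fun a => all (fun b => all (dId5b code_mul code_one code_inv a b) S4_codes) S4_codes)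
      S4_codes.
Proof. by vm_compute. Qed.

Lemma S4_satisfies_basis : satisfies_basis (fin_group S4).
Proof.
have inS := perm_code_mem.
split.
- by apply/dId1_fin; rewrite card_Sn.
- apply: dId2_of_bool => x1 x2; rewrite -(dId2b_morph perm_codeM perm_code1 perm_code_inj).
  exact: allP (allP S4_codes_dId2 _ (inS x1)) _ (inS x2).
- apply: dId3_of_bool => x; rewrite -(dId3b_morph perm_codeM perm_code1 perm_code_inj).
  exact: allP S4_codes_dId3 _ (inS x).
- apply: dId4_of_bool => x1 x2; rewrite -(dId4b_morph perm_codeM perm_code1 perm_code_inj).
  exact: allP (allP S4_codes_dId4 _ (inS x1)) _ (inS x2).
- apply: dId5_of_bool => x1 x2 x3.
  rewrite -(dId5b_morph perm_codeM perm_code1 perm_codeV perm_code_inj).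
  exact: allP (allP (allP S4_codes_dId5 _ (inS x1)) _ (inS x2)) _ (inS x3).
Qed.

(** * Finite models and cosets *)

Record group_table := GroupTable {
  gt_size : nat;
  gt_mul : 'I_gt_size -> 'I_gt_size -> 'I_gt_size;
  gt_one : 'I_gt_size;
  gt_inv : 'I_gt_size -> 'I_gt_size;
  gt_mulA : associative gt_mul;
  gt_mul1 : left_id gt_one gt_mul;
  gt_mulV : left_inverse gt_one gt_inv gt_mul }.

Definition table_group (t : group_table) : Type := 'I_(gt_size t).
HB.instance Definition _ t := Finite.on (table_group t).
HB.instance Definition _ t :=
  Finite_isGroup.Build (table_group t) (@gt_mulA t) (@gt_mul1 t) (@gt_mulV t).

Section FiniteModel.
Variable G : absgroup.
Hypothesis G_dId1 : dId1 G.

Definition ord_embeds n := exists e : 'I_n -> G, injective e.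

Lemma maximal_embedding : exists n, ord_embeds n /\ ~ ord_embeds n.+1.
Proof.
apply: NNPP => nomax.
have emb n : ord_embeds n.
  elim: n => [|n IH]; first by exists (fun _ => gone G); case.
  by apply: NNPP => nemb; apply: nomax; exists n.
have [e e_inj] := emb 25; have [i [j [lt_ij /e_inj eq_ij]]] := G_dId1 e.
by rewrite eq_ij ltnn in lt_ij.
Qed.

Lemma enumeration_exists :
  exists n (e : 'I_n -> G), injective e /\ forall y, exists i, e i = y.
Proof.
have [n [[e e_inj] nemb]] := maximal_embedding.
exists n, e; split=> // y; apply: NNPP => y_new; apply: nemb.
exists (fun i : 'I_n.+1 => if unlift ord_max i is Some j then e j else y).
move=> i j; case: (unliftP ord_max i) => [i'|] ->; case: (unliftP ord_max j) => [j'|] -> //.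
- by move/e_inj ->.
- by move=> eq_y; case: y_new; exists i'.
- by move=> eq_y; case: y_new; exists j'.
Qed.

Lemma finite_model : exists (gT : finGroupType) (f : gT -> G) (g : G -> gT),
  [/\ forall x y, f (x * y)%g = gmul (f x) (f y), cancel f g & cancel g f].
Proof.
have [n [e [e_inj e_onto]]] := enumeration_exists.
pose g y := proj1_sig (constructive_indefinite_description _ (e_onto y)).
have gK : cancel g e by move=> y; rewrite /g; case: constructive_indefinite_description.
have eK : cancel e g by move=> i; apply: e_inj; rewrite gK.
pose mul i j := g (gmul (e i) (e j)).
have mulA : associative mul by move=> i j k; rewrite /mul !gK gmulA.
have mul1 : left_id (g (gone G)) mul by move=> i; rewrite /mul gK gmul1 eK.
have mulV : left_inverse (g (gone G)) (fun i => g (ginv (e i))) mul.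
  by move=> i; rewrite /mul gK gmulV.
exists (table_group (GroupTable mulA mul1 mulV)), e, g.
by split=> // x y; rewrite /= /mul gK.
Qed.

End FiniteModel.

Section CosetEmbedding.
Local Open Scope group_scope.
Variables (gT : finGroupType) (H : {group gT}).
Hypotheses (H_index : #|[set: gT] : H| <= 4) (H_core : gcore H [set: gT] = 1).

Local Notation R := (rcosets H [set: gT]).
Let cosets := enum R.
Let m := size cosets.

Let m_le4 : m <= 4.
Proof. by rewrite /m /cosets -cardE. Qed.

Let rcoset_mem X x : X \in R -> X :* x \in R.
Proof.
case/rcosetsP=> y _ ->; apply/rcosetsP; exists (y * x); first exact: in_setT.
by rewrite rcosetM.
Qed.

Let nth_coset i : i < m -> nth set0 cosets i \in R.
Proof. by move=> lt_im; rewrite -mem_enum mem_nth. Qed.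

Let index_coset X : X \in R -> index X cosets < m.
Proof. by move=> XR; rewrite index_mem mem_enum. Qed.

Definition coset_perm_fun (x : gT) (i : 'I_4) : 'I_4 :=
  if i < m then inord (index (nth set0 cosets i :* x) cosets) else i.

Let coset_perm_val x (i : 'I_4) :
  i < m -> coset_perm_fun x i = index (nth set0 cosets i :* x) cosets :> nat.
Proof.
move=> lt_im; rewrite /coset_perm_fun lt_im inordK //.
exact: leq_trans (index_coset (rcoset_mem x (nth_coset lt_im))) m_le4.
Qed.

Let coset_perm_lt x (i : 'I_4) : i < m -> coset_perm_fun x i < m.
Proof. by move=> lt_im; rewrite coset_perm_val // index_coset // rcoset_mem // nth_coset. Qed.

Let coset_perm_nth x (i : 'I_4) :
  i < m -> nth set0 cosets (coset_perm_fun x i) = nth set0 cosets i :* x.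
Proof.
by move=> lt_im; rewrite coset_perm_val // nth_index // mem_enum rcoset_mem // nth_coset.
Qed.

Lemma coset_perm_inj x : injective (coset_perm_fun x).
Proof.
move=> i j eq_ij.
case: (boolP (i < m)) => lt_im; case: (boolP (j < m)) => lt_jm.
- have : nth set0 cosets i :* x = nth set0 cosets j :* x by rewrite -!coset_perm_nth // eq_ij.
  move/(congr1 (fun X => X :* x^-1)); rewrite -!rcosetM mulgV !rcoset1 => /eqP.
  by rewrite nth_uniq ?enum_uniq // => /eqP /val_inj.
- have := coset_perm_lt x lt_im.
  by rewrite eq_ij /coset_perm_fun (negbTE lt_jm) /= (negbTE lt_jm).
- have := coset_perm_lt x lt_jm.
  by rewrite -eq_ij /coset_perm_fun (negbTE lt_im) /= (negbTE lt_im).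
- by move: eq_ij; rewrite /coset_perm_fun (negbTE lt_im) (negbTE lt_jm).
Qed.

Definition coset_perm (x : gT) : S4 := perm (@coset_perm_inj x).

Lemma coset_permM x y : coset_perm (x * y) = coset_perm x * coset_perm y.
Proof.
apply/permP => i; rewrite permM !permE.
case: (boolP (i < m)) => lt_im.
- apply: ord_inj; rewrite coset_perm_val // coset_perm_val ?coset_perm_lt //.
  by rewrite coset_perm_nth // rcosetM.
- by rewrite /coset_perm_fun (negbTE lt_im) /= (negbTE lt_im).
Qed.

Lemma coset_perm1 : coset_perm 1 = 1.
Proof. by apply: (mulgI (coset_perm 1)); rewrite -coset_permM !mulg1. Qed.

Lemma coset_perm_ker x : coset_perm x = 1 -> x = 1.
Proof.
move=> x1.
have fixX X : X \in R -> X :* x = X.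
  move=> XR; have lt_Xm := index_coset XR.
  have lt_X4 : index X cosets < 4 := leq_trans lt_Xm m_le4.
  have := permE (@coset_perm_inj x) (Ordinal lt_X4).
  rewrite -/(coset_perm x) x1 perm1 => fixi.
  have := coset_perm_nth x (i := Ordinal lt_X4) lt_Xm.
  by rewrite -fixi /= nth_index // mem_enum.
have : x \in 'C(R | 'Rs) by apply/astabP => X XR; rewrite /= rcosetE fixX.
by rewrite astabRs_rcosets H_core => /set1P.
Qed.

Lemma coset_perm_injective : injective coset_perm.
Proof.
move=> x y eq_xy; rewrite -(mulgKV y x) (@coset_perm_ker (x * y^-1)) ?mul1g //.
by rewrite coset_permM eq_xy -coset_permM mulgV coset_perm1.
Qed.

End CosetEmbedding.

(** * Finite groups satisfying the d-identities *)

Lemma smooth23_le24 n : 0 < n <= 24 -> (forall p, prime p -> p %| n -> p <= 3) ->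
  n \in [:: 1; 2; 3; 4; 6; 8; 9; 12; 16; 18; 24].
Proof.
case/andP=> n_gt0 n_le24 small.
have: all (fun n => (n \in [:: 1; 2; 3; 4; 6; 8; 9; 12; 16; 18; 24]) ||
                    has (fun p => [&& prime p, p %| n & 3 < p]) (iota 0 25)) (iota 1 24).
  by [].
move/allP/(_ n); rewrite mem_iota n_gt0 add1n ltnS n_le24 => /(_ isT) /orP [//|].
by case/hasP=> p _ /and3P [p_pr p_dvd]; rewrite ltnNge small.
Qed.

Lemma divisors_all (P : pred nat) m d : 0 < m -> all P (divisors m) -> d %| m -> P d.
Proof. by move=> m_gt0 /allP allP_m; rewrite dvdn_divisors //; apply: allP_m. Qed.

Lemma card_lt_exists_notin (T : finType) (A B : {set T}) :
  #|B| < #|A| -> exists2 x, x \in A & x \notin B.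
Proof. by move=> lt_BA; apply/subsetPn; apply: contraTN lt_BA => /subset_leq_card; rewrite -leqNgt. Qed.

Lemma card_set4_le (T : finType) (a b c d : T) : #|[set a; b; c; d]| <= 4.
Proof.
apply: leq_trans (leq_card_setU _ _) _; rewrite cards1 addn1 ltnS.
by apply: leq_trans (leq_card_setU _ _) _; rewrite cards1 addn1 ltnS cards2; case: (_ != _).
Qed.

Section GroupFacts.
Local Open Scope group_scope.
Variable gT : finGroupType.
Implicit Types b c x y : gT.

Lemma elt_of_order p : prime p -> (p %| #|gT|)%N -> exists x, #[x] = p.
Proof. by move=> p_pr; rewrite -cardsT => /(Cauchy p_pr) [x _ ox]; exists x. Qed.

Lemma index_cycle x : #|[set: gT] : <[x]>| = (#|gT| %/ #[x])%N.
Proof. by rewrite -divgS ?subsetT // cardsT. Qed.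

Lemma involution_invg x : x ^+ 2 = 1 -> x^-1 = x.
Proof. by move=> x2; rewrite -[RHS](mulKg x) -expg2 x2 mulg1. Qed.

Lemma order_eq2 x : x ^+ 2 = 1 -> x != 1 -> #[x] = 2%N.
Proof. by move=> x2 x1; apply/prime_nt_dvdP; rewrite ?order_eq1 ?order_dvdn ?x2. Qed.

Lemma involutions_prod_commute b x :
  b ^+ 2 = 1 -> x ^+ 2 = 1 -> (b * x) ^+ 2 = 1 -> commute b x.
Proof.
move=> b2 x2 bx2; have := involution_invg bx2.
by rewrite invMg (involution_invg x2) (involution_invg b2).
Qed.

Lemma order2_cycle_nt b x : #[b] = 2%N -> x \in <[b]> -> x != 1 -> x = b.
Proof.
move=> ob /cycleP [i ->]; rewrite -expg_mod_order ob.
have : (i %% 2 < 2)%N by rewrite ltn_mod.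
by case: (i %% 2)%N => [|[|//]] _; rewrite ?expg0 ?eqxx ?expg1.
Qed.

Lemma class_sub_cycle_prime x :
  prime #[x] -> gcore <[x]> [set: gT] != 1 -> x ^: [set: gT] \subset <[x]>.
Proof.
move=> pr_x core_nt.
have [sub_core | ti_core] := prime_subgroupVti (gcore <[x]> [set: gT]) pr_x.
  apply: subset_trans (gcore_sub <[x]> [set: gT]%G).
  by rewrite class_sub_norm ?gcore_norm // (subsetP sub_core) ?cycle_id.
by move: core_nt; rewrite -(setIidPl (gcore_sub _ _)) ti_core eqxx.
Qed.

Lemma core_cycle_involution b y :
  #[b] = 2%N -> y \notin 'C[b] -> gcore <[b]> [set: gT] = 1.
Proof.
move=> ob; apply: contraNeq => core_nt; apply/cent1P.
have bJ : b ^ y = b.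
  apply: order2_cycle_nt; rewrite ?conjg_eq1 -?order_eq1 ?ob //.
  by apply: subsetP (class_sub_cycle_prime _ core_nt) _ (memJ_class _ (in_setT y)); rewrite ob.
by rewrite /commute [RHS]conjgC bJ.
Qed.

(* The [z i] generate an elementary abelian group, in which every disjunct of [theta]
   collapses to [z i = 1], [z i = z j] or [z i = z j * z k]. *)
Lemma not_theta_involutions (z : 'I_3 -> gT) :
  (forall i, z i ^+ 2 = 1) -> (forall i j, commute (z i) (z j)) ->
  (forall i, z i != 1) -> (forall i j, i != j -> z i != z j) ->
  (forall i j k, i != j -> j != k -> i != k -> z i != z j * z k) ->
  ~ @theta (fin_group gT) z.
Proof.
move=> z2 zc z1 z_inj z_prod.
have cube x : x ^+ 2 = 1 -> x ^+ 3 = x by move=> x2; rewrite expgS x2 mulg1.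
have prod2 j k : (z j * z k) ^+ 2 = 1 by rewrite expgMn // !z2 mulg1.
rewrite /theta /inpow.
case=> [[i [j [ij +]]] | [[i [j [k [[ij jk ik] +]]]] | [i [j [k [[ij jk ik] +]]]]]];
  rewrite !gpow_fin /=.
- rewrite (cube _ (z2 j)) z2; have /eqP := z1 i; have /eqP := z_inj _ _ ij; tauto.
- rewrite (cube _ (prod2 j k)) prod2; have /eqP := z1 i.
  have /eqP := z_prod _ _ _ ij jk ik; tauto.
- have ne1 : z i * z j <> 1.
    move/(canRL (mulgK (z j))); rewrite mul1g (involution_invg (z2 j)).
    exact/eqP/z_inj.
  have ne_prod : z i * z j <> z j * z k.
    by rewrite (zc j k) => /mulIg; apply/eqP/z_inj.
  by rewrite (cube _ (prod2 j k)) prod2; tauto.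
Qed.

Lemma independent_involutions_not_theta x1 x2 x3 :
  x1 ^+ 2 = 1 -> x2 ^+ 2 = 1 -> x3 ^+ 2 = 1 ->
  commute x1 x2 -> commute x1 x3 -> commute x2 x3 ->
  x1 != 1 -> x2 \notin [set 1; x1] -> x3 \notin [set 1; x1; x2; x1 * x2] ->
  ~ @theta (fin_group gT) [ffun i => of3 x1 x2 x3 i].
Proof.
move=> s1 s2 s3 c12 c13 c23 n1; rewrite !inE !negb_or.
case/andP=> n21 n22 /andP [/andP [/andP [n31 n32] n33] /eqP n34].
have rotate a b c : b ^+ 2 = 1 -> a = b * c -> c = b * a.
  by move=> b2 ->; rewrite mulgA -expg2 b2 mul1g.
apply: not_theta_involutions.
- by case=> [[|[|[|//]]] ?]; rewrite ffunE.
- by case=> [[|[|[|//]]] ?] [[|[|[|//]]] ?]; rewrite !ffunE.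
- by case=> [[|[|[|//]]] ?]; rewrite ffunE.
- by case=> [[|[|[|//]]] ?] [[|[|[|//]]] ?] //= _; rewrite !ffunE //= eq_sym.
case=> [[|[|[|//]]] ?] [[|[|[|//]]] ?] [[|[|[|//]]] ?] //= _ _ _;
  rewrite !ffunE /=; apply/eqP => eq_prod; apply: n34.
- by rewrite c12; apply: rotate s2 eq_prod.
- by rewrite c12; apply: rotate s2 _; rewrite c23.
- exact: rotate s1 eq_prod.
- by apply: rotate s1 _; rewrite c13.
- exact: eq_prod.
- by rewrite c12.
Qed.

End GroupFacts.

Definition core_free_index_le4 (gT : finGroupType) : Prop :=
  exists H : {group gT}, #|[set: gT] : H|%g <= 4 /\ gcore H [set: gT] = 1%g.

Section Classification.
Local Open Scope group_scope.
Variable gT : finGroupType.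
Hypotheses (h1 : dId1 (fin_group gT)) (h2 : dId2 (fin_group gT)).
Hypotheses (h3 : dId3 (fin_group gT)) (h4 : dId4 (fin_group gT)).
Hypothesis h5 : dId5 (fin_group gT).
Local Notation n := #|gT|.
Local Notation G := [set: gT]%G.
Implicit Types a b c x y : gT.

Lemma expg3_or_expg4 x : x ^+ 3 = 1 \/ x ^+ 4 = 1.
Proof. by have := h3 x; rewrite !gpow_fin. Qed.

Lemma prime_dvd_card_le3 p : prime p -> (p %| n)%N -> (p <= 3)%N.
Proof.
move=> p_pr /(elt_of_order p_pr) [x ox].
case: (expg3_or_expg4 x) => /eqP; rewrite -order_dvdn ox => /dvdn_leq; first exact.
by move=> /(_ isT); rewrite leq_eqVlt ltnS => /orP [/eqP p4|//]; rewrite p4 in p_pr.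
Qed.

Lemma card_cases : n \in [:: 1; 2; 3; 4; 6; 8; 9; 12; 16; 18; 24]%N.
Proof.
apply: smooth23_le24; last exact: prime_dvd_card_le3.
have n_gt0 : (0 < n)%N by apply/card_gt0P; exists 1.
by rewrite n_gt0; apply/dId1_fin.
Qed.

Lemma no_order6 b c : #[b] = 2%N -> #[c] = 3%N -> c \notin 'C[b].
Proof.
move=> ob oc; apply/negP => /cent1P /commute_sym cbc.
have b4 : b ^+ 4 = 1 by apply/eqP; rewrite -order_dvdn ob.
have c3 : c ^+ 3 = 1 by apply/eqP; rewrite -order_dvdn oc.
case: (expg3_or_expg4 (b * c)); rewrite expgMn // => /eqP.
  by rewrite c3 mulg1 -order_dvdn ob.
by rewrite b4 mul1g -order_dvdn oc.
Qed.

Lemma small_core_free : (n <= 4)%N -> core_free_index_le4 gT.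
Proof. by exists 1%G; rewrite indexg1 cardsT; split=> //; apply/trivgP/gcore_sub. Qed.

Lemma card6_core_free : n = 6%N -> core_free_index_le4 gT.
Proof.
move=> n6; have [b ob] : exists b, #[b] = 2%N by apply: elt_of_order; rewrite ?n6.
have [c oc] : exists c, #[c] = 3%N by apply: elt_of_order; rewrite ?n6.
exists <[b]>%G; split; first by rewrite index_cycle n6 ob.
exact: core_cycle_involution ob (no_order6 ob oc).
Qed.

Lemma cent1_order3 c : (n %| 24)%N -> #[c] = 3%N -> #|'C[c]| = 3%N.
Proof.
move=> n_dvd24 oc.
have dvd3 : (3 %| #|'C[c]|)%N by rewrite -oc cardSg // cycle_subG cent1id.
have ndvd2 : ~~ (2 %| #|'C[c]|)%N.
  apply/negP => /(Cauchy (isT : prime 2)) [b Cb ob].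
  by move: Cb; rewrite cent1C (negbTE (no_order6 ob oc)).
have dvd24 : (#|'C[c]| %| 24)%N.
  by apply: dvdn_trans n_dvd24; rewrite -cardsT cardSg ?subsetT.
have := @divisors_all (fun d => (3 %| d) ==> ~~ (2 %| d) ==> (d == 3))%N 24 _ isT isT dvd24.
by rewrite dvd3 ndvd2 => /eqP.
Qed.

Lemma card_class_order3 c : (n %| 24)%N -> #[c] = 3%N -> #|c ^: G| = (n %/ 3)%N.
Proof.
move=> n_dvd24 oc; rewrite -index_cent1 setTI -(cent1_order3 n_dvd24 oc).
by rewrite -divgS ?subsetT ?cardsT.
Qed.

Lemma card12_core_free : n = 12%N -> core_free_index_le4 gT.
Proof.
move=> n12; have [c oc] : exists c, #[c] = 3%N by apply: elt_of_order; rewrite ?n12.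
exists <[c]>%G; split; first by rewrite index_cycle n12 oc.
apply/eqP; apply: contraT => core_nt.
have pr_c : prime #[c] by rewrite oc.
have := subset_leq_card (class_sub_cycle_prime pr_c core_nt).
by rewrite card_class_order3 ?n12 // -orderE oc.
Qed.

Lemma card24_normal_order3 (K : {set gT}) c :
  n = 24%N -> G \subset 'N(K) -> c \in K -> #[c] = 3%N -> (8 <= #|K|)%N.
Proof.
move=> n24 nKG Kc oc; have <- : #|c ^: G| = 8%N by rewrite card_class_order3 ?n24.
by rewrite subset_leq_card // class_sub_norm.
Qed.

Lemma card24_Sylow3_index (P : {group gT}) :
  n = 24%N -> 3.-Sylow(G) P -> #|G : 'N_G(P)| = 4%N.
Proof.
move=> n24 sylP; rewrite -(card_Syl sylP).
have dvd24 : (#|'Syl_3(G)| %| 24)%N by rewrite -n24 -cardsT card_Syl_dvd.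
have := @divisors_all (fun d => (d %% 3 == 1) ==> (d == 1) || (d == 4))%N 24 _ isT isT dvd24.
rewrite card_Syl_mod // => /orP [/eqP syl1|/eqP //].
have nPG : G \subset 'N(P).
  by move: syl1; rewrite (card_Syl sylP) => /eqP; rewrite indexg_eq1 subsetI => /andP [].
have cardP : #|P| = 3%N by rewrite (card_Hall sylP) cardsT n24 p_part.
have dvd3P : (3 %| #|P|)%N by rewrite cardP.
have [c Pc oc] := Cauchy (isT : prime 3) dvd3P.
by have := card24_normal_order3 n24 nPG Pc oc; rewrite cardP.
Qed.

Lemma card24_core_free : n = 24%N -> core_free_index_le4 gT.
Proof.
move=> n24; have [P sylP] := Sylow_exists 3 G.
have idxN := card24_Sylow3_index n24 sylP.
exists 'N_G(P)%G; split; first by rewrite idxN.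
set K := gcore _ _; apply/eqP; rewrite trivg_card1; apply: contraT => K_nt.
have nKG : G \subset 'N(K) by apply: gcore_norm.
have cardN : #|'N_G(P)| = 6%N.
  apply/eqP; rewrite -(eqn_pmul2r (isT : (0 < 4)%N)) -{1}idxN Lagrange ?subsetT //.
  by rewrite cardsT n24.
have dvdK6 : (#|K| %| 6)%N by rewrite -cardN cardSg ?gcore_sub.
have [dvd3 | ndvd3] := boolP (3 %| #|K|)%N.
  have [c Kc oc] := Cauchy (isT : prime 3) dvd3.
  have := card24_normal_order3 n24 nKG Kc oc.
  by rewrite leqNgt (leq_ltn_trans (@dvdn_leq _ 6 isT dvdK6)).
have cardK : #|K| = 2%N.
  have := @divisors_all (fun d => (d != 1) ==> ~~ (3 %| d) ==> (d == 2))%N 6 _ isT isT dvdK6.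
  by rewrite K_nt ndvd3 => /eqP.
have dvd2K : (2 %| #|K|)%N by rewrite cardK.
have [b Kb ob] := Cauchy (isT : prime 2) dvd2K.
have [c oc] : exists c, #[c] = 3%N by apply: elt_of_order; rewrite ?n24.
have eK : <[b]> = K by apply/eqP; rewrite eqEcard cycle_subG Kb -orderE ob cardK /=.
have : K \subset gcore <[b]> G by apply: gcore_max; rewrite // -eK.
rewrite (core_cycle_involution ob (no_order6 ob oc)) => /subset_leq_card.
by rewrite cards1 cardK.
Qed.

Section TwoGroups.
Hypotheses (n_ndvd3 : ~~ (3 %| n)%N) (n_ge8 : (8 <= n)%N).
Local Notation sq1 := [set x : gT | x ^+ 2 == 1].

Lemma expg3_eq1 x : x ^+ 3 = 1 -> x = 1.
Proof.
move=> x3; apply/eqP; rewrite -order_eq1 -dvdn1.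
have cop : coprime 3 n by rewrite prime_coprime.
by rewrite -(eqP cop) dvdn_gcd order_dvdn x3 eqxx -cardsT order_dvdG ?in_setT.
Qed.

Lemma expg4_eq1 x : x ^+ 4 = 1.
Proof. by case: (expg3_or_expg4 x) => // /expg3_eq1 ->; rewrite expg1n. Qed.

Lemma non_involution_pair a y : a ^+ 2 != 1 -> y ^+ 2 != 1 -> y = a \/ y = a^-1.
Proof.
move=> a2 y2; have exp6 x : x ^+ 6 = x ^+ 2 by rewrite (expgD x 2 4) expg4_eq1 mulg1.
have := h4 a y; rewrite !gpow_fin /= !exp6.
case=> [/eqP|[/eqP|[->|ay1]]]; [by rewrite (negbTE a2) | by rewrite (negbTE y2) | by left | right].
have {}ay1 : a * y = 1 by case: ay1 => // /expg3_eq1.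
by rewrite -[y](mulKg a) ay1 mulg1.
Qed.

Lemma non_involutions_sub : exists a, ~: sq1 \subset [set a; a^-1].
Proof.
have [-> | [a a_nI]] := set_0Vmem (~: sq1); first by exists 1; rewrite sub0set.
exists a; apply/subsetP => y y_nI; move: a_nI y_nI; rewrite !inE => a2 y2.
by case: (non_involution_pair a2 y2) => ->; rewrite eqxx ?orbT.
Qed.

Lemma card_sq1_ge6 : (6 <= #|sq1|)%N.
Proof.
have [a sub_a] := non_involutions_sub.
have le2 : (#|~: sq1| <= 2)%N.
  by apply: leq_trans (subset_leq_card sub_a) _; rewrite cards2; case: (_ != _).
rewrite -(leq_add2r #|~: sq1|) cardsC; apply: leq_trans n_ge8.
exact: (leq_add (leqnn 6) le2).
Qed.

Lemma no_independent_involutions x1 x2 x3 :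
  x1 ^+ 2 = 1 -> x2 ^+ 2 = 1 -> x3 ^+ 2 = 1 ->
  commute x1 x2 -> commute x1 x3 -> commute x2 x3 ->
  x1 != 1 -> x2 \notin [set 1; x1] -> x3 \notin [set 1; x1; x2; x1 * x2] -> False.
Proof.
move=> s1 s2 s3 c12 c13 c23 n1 n2 n3.
have cube_nt a : a != 1 -> a ^+ 3 <> 1 by move=> a1 /expg3_eq1 /eqP; apply/negP.
have cube_neq a b : b != a -> (a^-1 * b) ^+ 3 <> 1.
  by move=> ba /expg3_eq1 /eqP; rewrite -eq_mulVg1 eq_sym; apply/negP.
have [n21 n2x1] : x2 != 1 /\ x2 != x1 by move: n2; rewrite !inE negb_or => /andP.
have [[n31 n3x1] n3x2] : (x3 != 1 /\ x3 != x1) /\ x3 != x2.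
  by move: n3; rewrite !inE !negb_or => /andP [/andP [/andP [-> ->] ->]].
move: (cube_nt _ n1) (cube_nt _ n21) (cube_nt _ n31) => k1 k2 k3.
move: (cube_neq _ _ n2x1) (cube_neq _ _ n3x1) (cube_neq _ _ n3x2) => k12 k13 k23.
move: (h5 x1 x2 x3); rewrite !gpow_fin /= => -[//|[//|[//|[//|[//|[//|]]]]]].
exact: independent_involutions_not_theta.
Qed.

Lemma noncentral_involution : exists b y, #[b] = 2%N /\ y \notin 'C[b].
Proof.
apply: NNPP => all_central.
have cent b y : b ^+ 2 = 1 -> commute b y.
  move=> b2; have [->|b1] := eqVneq b 1; first exact/commute_sym/commute1.
  apply/commute_sym/cent1P; apply: NNPP => /negP y_ncent.
  by apply: all_central; exists b, y; rewrite order_eq2.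
have [x1 s1 n1] : exists2 x, x \in sq1 & x \notin [set 1].
  by apply: card_lt_exists_notin; rewrite cards1 (leq_trans _ card_sq1_ge6).
have [x2 s2 n2] : exists2 x, x \in sq1 & x \notin [set 1; x1].
  by apply: card_lt_exists_notin; rewrite cards2 (leq_trans _ card_sq1_ge6) //; case: (_ != _).
have [x3 s3 n3] : exists2 x, x \in sq1 & x \notin [set 1; x1; x2; x1 * x2].
  apply: card_lt_exists_notin.
  by rewrite (leq_ltn_trans (card_set4_le _ _ _ _)) // (leq_trans _ card_sq1_ge6).
rewrite !inE in s1 s2 s3 n1; move/eqP: s1 => s1; move/eqP: s2 => s2; move/eqP: s3 => s3.
exact: no_independent_involutions s1 s2 s3 (cent _ _ s1) (cent _ _ s1) (cent _ _ s2) n1 n2 n3.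
Qed.

Lemma card8_core_free : n = 8%N -> core_free_index_le4 gT.
Proof.
move=> n8; have [b [y [ob y_ncent]]] := noncentral_involution.
exists <[b]>%G; split; first by rewrite index_cycle n8 ob.
exact: core_cycle_involution ob y_ncent.
Qed.

(* The [x] with [x] and [b * x] involutions centralize [b], and all but four elements
   are such, so [b] would be central. *)
Lemma card16_impossible : n != 16%N.
Proof.
apply/eqP => n16; have [b [y [ob y_ncent]]] := noncentral_involution.
have [a sub_a] := non_involutions_sub.
have b2 : b ^+ 2 = 1 by apply/eqP; rewrite -order_dvdn ob.
pose S := [set x | (x ^+ 2 == 1) && ((b * x) ^+ 2 == 1)].
have S_cent : S \subset 'C[b].
  apply/subsetP => x; rewrite inE => /andP [/eqP x2 /eqP bx2].
  exact/cent1P/commute_sym/involutions_prod_commute.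
have notS_small : ~: S \subset [set a; a^-1; b^-1 * a; b^-1 * a^-1].
  apply/subsetP => x; rewrite !inE negb_and => /orP [x_nI | bx_nI].
    have : x \in ~: sq1 by rewrite !inE.
    by move/(subsetP sub_a); rewrite !inE => /orP [] ->; rewrite ?orbT.
  have : b * x \in ~: sq1 by rewrite !inE.
  by move/(subsetP sub_a); rewrite !inE => /orP [] /eqP <-; rewrite mulKg eqxx ?orbT.
have C_ge12 : (12 <= #|'C[b]|)%N.
  apply: leq_trans (subset_leq_card S_cent).
  have := cardsC S; rewrite n16 => cardS.
  have le4 := leq_trans (subset_leq_card notS_small) (card_set4_le _ _ _ _).
  have le16 : (16 <= #|S| + 4)%N by rewrite -cardS leq_add2l.
  by rewrite -(leq_add2r 4).
have C16 : #|'C[b]| = 16%N.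
  have dvd16 : (#|'C[b]| %| 16)%N by rewrite -n16 -cardsT cardSg ?subsetT.
  have := @divisors_all (fun d => (12 <= d) ==> (d == 16))%N 16 _ isT isT dvd16.
  by rewrite C_ge12 => /eqP.
have CT : 'C[b] = G by apply/eqP; rewrite eqEcard subsetT C16 cardsT n16 /=.
by move: y_ncent; rewrite CT in_setT.
Qed.

End TwoGroups.

Lemma no_subgroup_order9 (P : {group gT}) : #|P| = 9%N -> False.
Proof.
move=> cardP.
have P_exp4 x : x \in P -> x ^+ 4 = 1 -> x = 1.
  move=> Px x4; apply/eqP; rewrite -order_eq1 -dvdn1.
  have : (#[x] %| gcdn 4 9)%N by rewrite dvdn_gcd order_dvdn x4 eqxx -cardP order_dvdG.
  by [].
have dvd3P : (3 %| #|P|)%N by rewrite cardP.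
have [x1 Px1 ox1] := Cauchy (isT : prime 3) dvd3P.
have [x2 Px2 x2_n] : exists2 x, x \in P & x \notin <[x1]>.
  by apply: card_lt_exists_notin; rewrite -orderE ox1 cardP.
have x2_nt : x2 != 1 by apply: contraNneq x2_n => ->; apply: group1.
have := h2 x1 x2; rewrite !gpow_fin /=.
case=> [/(P_exp4 _ Px1) x1_1 | [/(P_exp4 _ Px2) | [x12 | x122]]].
- by move: ox1; rewrite x1_1 order1.
- by move/eqP; rewrite (negbTE x2_nt).
- have {}x12 := P_exp4 _ (groupM Px1 Px2) x12.
  case/negP: x2_n; have -> : x2 = x1^-1 by rewrite -[x2](mulKg x1) x12 mulg1.
  by rewrite groupV cycle_id.
have {}x122 := P_exp4 _ (groupM Px1 (groupX 2 Px2)) x122.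
have x2_sq : x2 ^+ 2 = x1^-1 by rewrite -[x2 ^+ 2](mulKg x1) x122 mulg1.
have x2_cube : x2 ^+ 3 = 1.
  by case: (expg3_or_expg4 x2) => // /(P_exp4 _ Px2) x2_1; rewrite x2_1 eqxx in x2_nt.
case/negP: x2_n; have -> : x2 = x1^-1 ^+ 2.
  by rewrite -x2_sq -expgM -[in LHS](mul1g x2) -x2_cube -expgSr.
by rewrite groupX // groupV cycle_id.
Qed.

Lemma core_free_subgroup_exists : core_free_index_le4 gT.
Proof.
have [le4 | gt4] := leqP n 4; first exact: small_core_free.
have [P sylP] := Sylow_exists 3 G.
have cardP := card_Hall sylP; rewrite cardsT in cardP.
move: card_cases gt4; rewrite !inE.
case/or4P=> [| | | /or4P [| | | /or4P [| | | /orP []]]] /eqP n_eq; rewrite n_eq // => _.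
- exact: card6_core_free.
- by apply: card8_core_free; rewrite n_eq.
- by exfalso; apply: (no_subgroup_order9 (P := P)); rewrite cardP n_eq p_part.
- exact: card12_core_free.
- by move: card16_impossible; rewrite n_eq => /(_ isT isT).
- by exfalso; apply: (no_subgroup_order9 (P := P)); rewrite cardP n_eq p_part.
- exact: card24_core_free.
Qed.

End Classification.

Local Open Scope group_scope.

Lemma section_of_embedding (G : absgroup) (gT : finGroupType) (g : G -> gT) (phi : gT -> S4) :
  (forall a b, g (gmul a b) = g a * g b) -> injective g -> (forall x, exists a, g a = x) ->
  {morph phi : x y / x * y} -> injective phi -> section_of S4 G.
Proof.
move=> gM g_inj g_onto phiM phi_inj.
pose mphi : {morphism [set: gT] >-> S4} := Morphism (in2W phiM).
exists (mphi @* [set: gT])%G, 1%G, (fun a => coset 1 (phi (g a))).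
have N1 (s : S4) : s \in 'N(1) by rewrite norm1 inE.
split=> [||a b|c]; first exact: normal1.
- move=> a b /(injmP (@coset1_injm S4)) eq_ab.
  by apply/g_inj/phi_inj/eq_ab; apply: N1.
- by rewrite /= gM phiM morphM.
split=> [/morphimP [_ _ /morphimP [x _ _ ->] ->] | [a <-]].
  by have [a <-] := g_onto x; exists a.
by apply/mem_quotient/(mem_morphim mphi); rewrite inE.
Qed.

Theorem proposition4 :
  satisfies_basis (fin_group S4) /\
  (forall G : absgroup, satisfies_basis G -> section_of S4 G).
Proof.
split=> [|G G_basis]; first exact: S4_satisfies_basis.
have [G_dId1 _ _ _ _] := G_basis.
have [gT [f [g [fM fK gK]]]] := finite_model G_dId1.
have f_inj := can_inj fK.
have [d1 d2 d3 d4 d5] := @satisfies_basis_sub (fin_group gT) G f fM f_inj G_basis.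
have [H [H_index H_core]] := core_free_subgroup_exists d1 d2 d3 d4 d5.
have gM a b : g (gmul a b) = g a * g b by apply: f_inj; rewrite fM !gK.
have g_onto x : exists a, g a = x by exists (f x); rewrite fK.
apply: (section_of_embedding gM (can_inj gK) g_onto).
  exact: coset_permM H_index.
exact: coset_perm_injective H_core.
Qed.
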